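(* Let $M$ be a finitely generated abelian group. For every $e\in\mathbb{Z}\oplus M$ there exists $\tilde d\in\mathbb{Z}\oplus M$ such that $M\cong(\mathbb{Z}\oplus M)/\langle e,\tilde d\rangle$, where $\langle e,\tilde d\rangle$ is the subgroup generated by $e$ and $\tilde d$. *)

From HB Require Import structures.
From mathcomp Require Import all_boot all_order all_algebra.
Set Implicit Arguments. Unset Strict Implicit. Unset Printing Implicit Defensive.
Import Order.TTheory GRing.Theory Num.Theory.
Local Open Scope ring_scope.

Definition fin_gen (M : zmodType) : Prop :=
  exists s : seq M, forall x : M,
    exists c : seq int, size c = size s /\
      x = \sum_(i < size s) (s`_i *~ c`_i).

Definition in_gen2 (G : zmodType) (e d : G) (x : G) : Prop :=
  exists a b : int, x = e *~ a + d *~ b.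

(* M is isomorphic to G / H (H given as a predicate, a subgroup) iff there is a
   surjective group homomorphism G -> M with kernel exactly H
   (first isomorphism theorem). *)
Definition iso_quot (G M : zmodType) (H : G -> Prop) : Prop :=
  exists f : G -> M,
    (forall x y, f (x + y) = f x + f y) /\
    (forall y : M, exists x : G, f x = y) /\
    (forall x : G, f x = 0 <-> H x).

From HB Require Import structures.
From mathcomp Require Import all_boot all_order all_algebra.
From Stdlib Require Import Classical.

(* Present M as Z^g / A Z^g through the map comb given by g generators, and
   write e = (a, comb mu).  Then M and (Z x M) / <e> are the cokernels of
   presM = [[1, 0], [0, A]] and presQ = [[a, 0], [mu, A]] acting on Z^(1+g).
   By the Smith normal form, a square integer matrix and its transpose have
   isomorphic cokernels, and the transposes satisfy
   colspan presM^T = colspan presQ^T + Z e_0.  Hence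
   M = coker presM^T = coker presQ^T / <e_0> = coker presQ / <d'>, where d' is
   the preimage of e_0 under the isomorphism coker presQ = coker presQ^T; its
   image in Z x M is the required d. *)

Set Implicit Arguments. Unset Strict Implicit. Unset Printing Implicit Defensive.
Import GRing.Theory.
Local Open Scope ring_scope.

Definition is_subgroup (V : zmodType) (P : V -> Prop) : Prop :=
  P 0 /\ forall x y, P x -> P y -> P (x - y).

Section Subgroup.
Variables (V : zmodType) (P : V -> Prop).
Hypothesis subP : is_subgroup P.

Lemma subgroup0 : P 0.
Proof. by case: subP. Qed.

Lemma subgroupB x y : P x -> P y -> P (x - y).
Proof. by case: subP => _; apply. Qed.

Lemma subgroupN x : P x -> P (- x).
Proof. by move=> Px; rewrite -sub0r; apply: subgroupB => //; apply: subgroup0. Qed.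

Lemma subgroupD x y : P x -> P y -> P (x + y).
Proof. by move=> Px Py; rewrite -[y]opprK; apply/subgroupB/subgroupN. Qed.

Lemma subgroupMz x (k : int) : P x -> P (x *~ k).
Proof.
move=> Px; have subgroupMn (m : nat) : P (x *+ m).
  elim: m => [|m IHm]; first by rewrite mulr0n; apply: subgroup0.
  by rewrite mulrS; apply: subgroupD.
by case: k => m; rewrite ?NegzE ?mulrNz; [|apply: subgroupN]; apply: subgroupMn.
Qed.

End Subgroup.

Lemma classical_ex_minn (Q : nat -> Prop) :
  (exists n, Q n) -> exists n, Q n /\ forall m, Q m -> (n <= m)%N.
Proof.
move=> [n Qn]; apply: NNPP => no_min; elim/ltn_ind: n Qn => n IHn Qn.
apply: no_min; exists n; split=> // m Qm; rewrite leqNgt; apply/negP => lt_mn.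
exact: IHn lt_mn Qm.
Qed.

Lemma int_subgroup_dvdz (I : int -> Prop) :
  is_subgroup I -> exists t, forall x, I x <-> (t %| x)%Z.
Proof.
move=> subI; have I_dvdz t x : I t -> (t %| x)%Z -> I x.
  by move=> It /dvdzP[q ->]; rewrite mulrC -mulrzz; apply: subgroupMz.
have I_abs x : I x -> I `|x|%N.
  rewrite abszEsign; case: (x < 0); rewrite ?expr1 ?mulN1r ?mul1r //.
  exact: subgroupN.
case: (classic (exists n : nat, (0 < n)%N /\ I n)) => [pos | no_pos].
  have [n [[n_gt0 In] n_min]] := classical_ex_minn pos.
  exists n => x; split=> [Ix|]; last exact: I_dvdz.
  have I_mod : I (x %% n)%Z.
    have -> : (x %% n)%Z = x - (x %/ n)%Z * n.
      by apply/eqP; rewrite eq_sym subr_eq addrC -divz_eq.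
    by apply: subgroupB => //; apply: I_dvdz In _; apply: dvdz_mull.
  have n_neq0 : n%:Z != 0 by rewrite eqz_nat -lt0n.
  have r_lt_n : (`|(x %% n)%Z|%N < n)%N.
    by rewrite -ltz_nat gez0_abs ?modz_ge0 // ltz_pmod // ltz_nat.
  apply/dvdz_mod0P; case: (posnP `|(x %% n)%Z|%N) => [/eqP | r_gt0].
    by rewrite absz_eq0 => /eqP.
  by have := n_min _ (conj r_gt0 (I_abs _ I_mod)); rewrite leqNgt r_lt_n.
exists 0 => x; split=> [Ix|]; last exact: I_dvdz (subgroup0 subI).
rewrite dvd0z; apply/negPn/negP => x_neq0; apply: no_pos; exists `|x|%N.
by rewrite absz_gt0 x_neq0; split=> //; apply: I_abs.
Qed.

Definition colspan (R : pzRingType) m n (A : 'M[R]_(m, n)) (v : 'cV[R]_m) : Prop :=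
  exists u, v = A *m u.

Lemma colspan_mulmx_unitr (R : comUnitRingType) m n (A : 'M[R]_(m, n)) (B : 'M_n) v :
  B \in unitmx -> colspan (A *m B) v <-> colspan A v.
Proof.
move=> uB; split=> [[u ->] | [u ->]]; first by exists (B *m u); rewrite mulmxA.
by exists (invmx B *m u); rewrite -mulmxA mulKVmx.
Qed.

Lemma colspan_unitmx_mulmx (R : comUnitRingType) m n (S : 'M[R]_m) (A : 'M_(m, n)) v :
  S \in unitmx -> colspan (S *m A) (S *m v) <-> colspan A v.
Proof.
move=> uS; split=> [[u] | [u ->]]; last by exists u; rewrite mulmxA.
by rewrite -mulmxA => /(can_inj (mulKmx uS)) ->; exists u.
Qed.

Lemma colspan_trmx k (X : 'M[int]_k) :
  exists2 S : 'M_k, S \in unitmx & forall v, colspan X v <-> colspan X^T (S *m v).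
Proof.
have [L uL [R uR [d _ defX]]] := int_Smith_normal_form X.
set D := \matrix_(i, j) _ in defX.
have trD : D^T = D.
  apply/matrixP => i j; rewrite !mxE eq_sym.
  by case: eqP => [/val_inj -> | _]; rewrite ?mulr0n.
have uLT : L^T \in unitmx by rewrite unitmx_tr.
have uRT : R^T \in unitmx by rewrite unitmx_tr.
exists (R^T *m invmx L) => [|v]; first by rewrite unitmx_mul uRT unitmx_inv.
rewrite defX !trmx_mul trD mulmxA (colspan_mulmx_unitr _ _ uR).
rewrite (colspan_mulmx_unitr _ _ uLT) -mulmxA colspan_unitmx_mulmx //.
by rewrite // -{1}(mulKVmx uL v) colspan_unitmx_mulmx.
Qed.

Lemma mul_block_scalar_col g (t j : int) (vt u : 'cV_g) (A : 'M_g) :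
  block_mx t%:M 0 vt A *m col_mx j%:M u = col_mx t%:M vt *~ j + col_mx 0 (A *m u).
Proof.
rewrite mul_block_col -scaler_int intz scale_col_mx add_col_mx !mul_mx_scalar.
by rewrite !scale_scalar_mx !mul0mx.
Qed.

Lemma int_subgroup_colspan g (P : 'cV[int]_g -> Prop) :
  is_subgroup P -> exists A : 'M_g, forall v, P v <-> colspan A v.
Proof.
elim: g P => [|g IHg] P subP.
  exists 0 => v; rewrite flatmx0; split=> _; last exact: subgroup0.
  by exists 0; rewrite flatmx0.
move: P subP; rewrite -[g.+1]add1n => P subP.
have subB a b (x y : 'cV[int]_g) :
    col_mx a x - col_mx b y = col_mx (a - b) (x - y) :> 'cV_(1 + g).
  by rewrite opp_col_mx add_col_mx.
have [A' defA'] :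
    exists A' : 'M_g, forall v' : 'cV_g, P (col_mx 0 v') <-> colspan A' v'.
  apply: IHg; split=> [|x y Px Py]; first by rewrite col_mx0; apply: subgroup0.
  by rewrite -[0 : 'M_1]subr0 -subB; apply: subgroupB.
have [t defI] :
    exists t, forall x, (exists v' : 'cV_g, P (col_mx x%:M v')) <-> (t %| x)%Z.
  apply: int_subgroup_dvdz; split=> [|x y [vx Px] [vy Py]].
    by exists 0; rewrite raddf0 col_mx0; apply: subgroup0.
  by exists (vx - vy); rewrite raddfB -subB; apply: subgroupB.
have [vt Pt] := proj2 (defI t) (dvdzz t).
exists (block_mx t%:M 0 vt A') => v; split=> [Pv | [u ->]].
  rewrite -[v]vsubmxK [usubmx v]mx11_scalar in Pv *.
  have [j x_eq] : exists j, usubmx v 0 0 = j * t by apply/dvdzP/defI; exists (dsubmx v).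
  have := subgroupB subP Pv (subgroupMz subP j Pt).
  rewrite -scaler_int intz scale_col_mx scale_scalar_mx -x_eq subB subrr.
  move=> /defA'[u' defu']; exists (col_mx j%:M u').
  rewrite mul_block_scalar_col -scaler_int intz scale_col_mx add_col_mx addr0.
  by rewrite -defu' scale_scalar_mx -x_eq addrC subrK.
rewrite -[u]vsubmxK [usubmx u]mx11_scalar mul_block_scalar_col.
by apply: subgroupD => //; [apply: subgroupMz | apply/defA'; exists (dsubmx u)].
Qed.

Lemma iso_quot_of_surjective (V G M : zmodType) (rho : {additive V -> G})
    (phi : {additive V -> M}) (H : G -> Prop) :
  (forall y, exists v, rho v = y) -> (forall z, exists v, phi v = z) ->
  (forall v, phi v = 0 <-> H (rho v)) -> iso_quot M H.
Proof.
move=> rho_surj phi_surj ker_phi.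
have rho_sec y : exists v, rho v == y by have [v <-] := rho_surj y; exists v.
pose f y := phi (xchoose (rho_sec y)).
have f_rho v : f (rho v) = phi v.
  apply/eqP; rewrite -subr_eq0 -raddfB; apply/eqP/ker_phi.
  rewrite raddfB (eqP (xchooseP (rho_sec _))) subrr -(raddf0 rho).
  by apply/ker_phi; rewrite raddf0.
exists f; split; [|split].
- move=> y z; have [[v <-] [w <-]] := (rho_surj y, rho_surj z).
  by rewrite -raddfD !f_rho raddfD.
- by move=> z; have [v <-] := phi_surj z; exists (rho v); apply: f_rho.
- by move=> y; have [v <-] := rho_surj y; rewrite f_rho; apply: ker_phi.
Qed.

Section Presentation.
Variables (M : zmodType) (g : nat) (gen : 'I_g -> M).

Definition comb (v : 'cV[int]_g) : M := \sum_i gen i *~ v i 0.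

Lemma comb_is_zmod_morphism : zmod_morphism comb.
Proof. by move=> v w; rewrite -sumrB; apply: eq_bigr => i _; rewrite !mxE mulrzBr. Qed.

HB.instance Definition _ := GRing.isZmodMorphism.Build _ _ comb comb_is_zmod_morphism.

Definition comb_pair (v : 'cV[int]_(1 + g)) : int * M :=
  (usubmx v 0 0, comb (dsubmx v)).

Lemma comb_pair_is_zmod_morphism : zmod_morphism comb_pair.
Proof. by move=> v w; rewrite /comb_pair !raddfB /= !mxE. Qed.

HB.instance Definition _ :=
  GRing.isZmodMorphism.Build _ _ comb_pair comb_pair_is_zmod_morphism.

Lemma comb_pair_col_mx (c : 'cV_1) (v : 'cV_g) :
  comb_pair (col_mx c v) = (c 0 0, comb v).
Proof. by rewrite /comb_pair col_mxKu col_mxKd. Qed.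

Hypothesis comb_surj : forall x, exists v, comb v = x.

Lemma comb_pair_surj y : exists v, comb_pair v = y.
Proof.
case: y => a x; have [v <-] := comb_surj x.
by exists (col_mx a%:M v); rewrite comb_pair_col_mx mxE mulr1n.
Qed.

Variable A : 'M[int]_g.
Hypothesis ker_comb : forall v, comb v = 0 <-> colspan A v.
Variables (a : int) (mu : 'cV[int]_g).

Definition presM : 'M[int]_(1 + g) := block_mx 1%:M 0 0 A.
Definition presQ : 'M[int]_(1 + g) := block_mx a%:M 0 mu A.

Lemma colspan_presM v : colspan presM v <-> comb (dsubmx v) = 0.
Proof.
rewrite ker_comb; split=> [[u ->] | [u' defu']].
  by exists (dsubmx u); rewrite -{1}[u]vsubmxK mul_block_col col_mxKd mul0mx add0r.
exists (col_mx (usubmx v) u').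
by rewrite mul_block_col !mul1mx !mul0mx addr0 add0r -defu' vsubmxK.
Qed.

Lemma colspan_presM_tr v :
  colspan presM^T v <-> exists j : int, colspan presQ^T (v - col_mx j%:M 0).
Proof.
rewrite /presM /presQ !tr_block_mx !tr_scalar_mx !trmx0.
split=> [[u ->] | [j [u defv]]].
  exists ((usubmx u - mu^T *m dsubmx u) 0 0), (col_mx 0 (dsubmx u)).
  rewrite -mx11_scalar -{1}[u]vsubmxK !mul_block_col opp_col_mx add_col_mx.
  by rewrite !mul1mx !mul0mx !mulmx0 !add0r !addr0 subr0 opprB addrC subrK.
exists (col_mx (a%:M *m usubmx u + mu^T *m dsubmx u + j%:M) (dsubmx u)).
rewrite -[v](subrK (col_mx j%:M 0)) defv -{1}[u]vsubmxK !mul_block_col add_col_mx.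
by rewrite !mul1mx !mul0mx !add0r !addr0.
Qed.

Lemma comb_pair_presQ (k : int) u :
  comb_pair (presQ *m col_mx k%:M u) = (a, comb mu) *~ k.
Proof.
rewrite mul_block_scalar_col raddfD raddfMz /= !comb_pair_col_mx !mxE mulr1n.
have /ker_comb-> : colspan A (A *m u) by exists u.
by rewrite addr0.
Qed.

Lemma colspan_presQ_ker v : comb_pair v = 0 -> colspan presQ v.
Proof.
rewrite -[v]vsubmxK [usubmx v]mx11_scalar comb_pair_col_mx mxE mulr1n.
case=> -> /ker_comb[u defv]; exists (col_mx 0%:M u).
by rewrite mul_block_scalar_col mulr0z add0r defv raddf0.
Qed.

Lemma in_gen2_comb_pair w v :
  in_gen2 (a, comb mu) (comb_pair w) (comb_pair v) <->
  exists j : int, colspan presQ (v - w *~ j).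
Proof.
split=> [[k [j defv]] | [j [u defu]]].
  exists j; have [u defu] : colspan presQ (v - w *~ j - presQ *m col_mx k%:M 0).
    apply: colspan_presQ_ker.
    by rewrite !raddfB raddfMz /= comb_pair_presQ defv addrK subrr.
  by exists (u + col_mx k%:M 0); rewrite mulmxDr -defu subrK.
rewrite -[u]vsubmxK [usubmx u]mx11_scalar in defu.
exists (usubmx u 0 0), j; rewrite -(comb_pair_presQ _ (dsubmx u)) -defu.
by rewrite raddfB raddfMz /= subrK.
Qed.

Section Transpose.
Variables S0 Se : 'M[int]_(1 + g).
Hypotheses (unit_S0 : S0 \in unitmx) (unit_Se : Se \in unitmx).
Hypothesis colspan_presM_S0 : forall v, colspan presM v <-> colspan presM^T (S0 *m v).
Hypothesis colspan_presQ_Se : forall v, colspan presQ v <-> colspan presQ^T (Se *m v).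

Definition quot_map (v : 'cV[int]_(1 + g)) : M :=
  comb (dsubmx (invmx S0 *m (Se *m v))).

Lemma quot_map_is_zmod_morphism : zmod_morphism quot_map.
Proof. by move=> v w; rewrite /quot_map !mulmxBr !raddfB. Qed.

HB.instance Definition _ :=
  GRing.isZmodMorphism.Build _ _ quot_map quot_map_is_zmod_morphism.

Definition quot_gen : 'cV[int]_(1 + g) := invmx Se *m col_mx 1%:M 0.

Lemma quot_map_surj x : exists v, quot_map v = x.
Proof.
have [u <-] := comb_surj x; exists (invmx Se *m (S0 *m col_mx 0 u)).
by rewrite /quot_map mulKVmx // mulKmx // col_mxKd.
Qed.

Lemma quot_map_eq0 v :
  quot_map v = 0 <-> exists j : int, colspan presQ (v - quot_gen *~ j).
Proof.
have Se_quot_gen (j : int) : Se *m (quot_gen *~ j) = col_mx j%:M 0.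
  rewrite -scaler_int intz -scalemxAr mulKVmx // scale_col_mx scale_scalar_mx.
  by rewrite mulr1 scaler0.
have span_j (j : int) :
    colspan presQ (v - quot_gen *~ j) <-> colspan presQ^T (Se *m v - col_mx j%:M 0).
  by rewrite colspan_presQ_Se mulmxBr Se_quot_gen.
rewrite /quot_map -colspan_presM colspan_presM_S0 mulKVmx // colspan_presM_tr.
by split=> -[j /span_j]; exists j.
Qed.

Lemma iso_quot_quot_gen : iso_quot M (in_gen2 (a, comb mu) (comb_pair quot_gen)).
Proof.
apply: (iso_quot_of_surjective (rho := comb_pair) (phi := quot_map)).
- exact: comb_pair_surj.
- exact: quot_map_surj.
- by move=> v; rewrite quot_map_eq0 in_gen2_comb_pair.
Qed.

End Transpose.

Lemma presentation_iso_quot : exists d, iso_quot M (in_gen2 (a, comb mu) d).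
Proof.
have [S0 unit_S0 colspan_presM_S0] := colspan_trmx presM.
have [Se unit_Se colspan_presQ_Se] := colspan_trmx presQ.
exists (comb_pair (quot_gen Se)).
exact: (iso_quot_quot_gen unit_S0 unit_Se colspan_presM_S0 colspan_presQ_Se).
Qed.

End Presentation.

Theorem lemma5p3 (M : zmodType) (hM : fin_gen M) (e : (int * M)%type) :
  exists d : (int * M)%type, iso_quot M (in_gen2 e d).
Proof.
have [s gen_s] := hM.
pose gen (i : 'I_(size s)) := s`_i.
have comb_surj x : exists v, comb gen v = x.
  have [c [_ ->]] := gen_s x; exists (\col_i c`_i).
  by apply: eq_bigr => i _; rewrite mxE.
have [A ker_comb] : exists A : 'M_(size s), forall v, comb gen v = 0 <-> colspan A v.
  apply: int_subgroup_colspan; split=> [|v w]; first exact: raddf0.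
  by rewrite raddfB /= => -> ->; rewrite subrr.
have [mu comb_mu] := comb_surj e.2.
rewrite [e]surjective_pairing -comb_mu.
exact: presentation_iso_quot comb_surj A ker_comb e.1 mu.
Qed.
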